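(* For all $X,Y\in\mathbb{S}^n_{++}$ and all $s,t\in[0,1]$: (i) $X*_tY=Y*_{1-t}X$; (ii) $X*_s(X*_tY)=X*_{st}Y$; (iii) $(X*_sY)*_tY=X*_{s+t-st}Y$.
   Context: $\mathbb{S}^n_{++}$ denotes the set of real symmetric positive definite $n\times n$ matrices. For $X,Y\in\mathbb{S}^n_{++}$ the matrix $YX^{-1}$ has real positive eigenvalues; let $\alpha=\lambda_{\min}(YX^{-1})$ and $\beta=\lambda_{\max}(YX^{-1})$. For $0<\alpha\le\beta$ and $t\in\mathbb{R}$ set $\varphi_{\alpha\beta}(t)=\frac{\beta^t-\alpha^t}{\beta-\alpha}$ and $\psi_{\alpha\beta}(t)=\frac{\beta\alpha^t-\alpha\beta^t}{\beta-\alpha}$ if $\beta>\alpha$, and $\varphi_{\alpha\beta}(t)=t\alpha^{t-1}$, $\psi_{\alpha\beta}(t)=(1-t)\alpha^t$ if $\beta=\alpha$. The Thompson geodesic from $X$ to $Y$ is $X*_tY=\varphi_{\alpha\beta}(t)\,Y+\psi_{\alpha\beta}(t)\,X$. *)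

From HB Require Import structures.
From mathcomp Require Import all_boot all_order all_algebra.
From mathcomp Require Import boolp classical_sets reals exp.
Set Implicit Arguments. Unset Strict Implicit. Unset Printing Implicit Defensive.
Import Order.TTheory GRing.Theory Num.Theory.
Local Open Scope classical_set_scope.
Local Open Scope ring_scope.

Section Thompson.
Variable R : realType.

Definition posdef (n : nat) (A : 'M[R]_n) : Prop :=
  A^T = A /\ forall v : 'rV[R]_n, v != 0 -> 0 < (v *m A *m v^T) 0 0.

Definition spectrum (n : nat) (A : 'M[R]_n) : set R := [set a | eigenvalue A a].

Definition lambda_min (n : nat) (A : 'M[R]_n) : R := inf (spectrum A).
Definition lambda_max (n : nat) (A : 'M[R]_n) : R := sup (spectrum A).

Definition phi_ab (a b t : R) : R :=
  if b == a then t * a `^ (t - 1) else (b `^ t - a `^ t) / (b - a).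
Definition psi_ab (a b t : R) : R :=
  if b == a then (1 - t) * a `^ t else (b * a `^ t - a * b `^ t) / (b - a).

Definition thompson (n : nat) (X Y : 'M[R]_n) (t : R) : 'M[R]_n :=
  let a := lambda_min (Y *m invmx X) in
  let b := lambda_max (Y *m invmx X) in
  phi_ab a b t *: Y + psi_ab a b t *: X.

End Thompson.

From HB Require Import structures.
From mathcomp Require Import all_boot all_order all_algebra.
From mathcomp Require Import boolp classical_sets reals exp.
From mathcomp Require Import polyrcf complex spectral.
From mathcomp Require Import ring lra.
Set Implicit Arguments. Unset Strict Implicit. Unset Printing Implicit Defensive.
Import Order.TTheory GRing.Theory Num.Theory.
Local Open Scope classical_set_scope.
Local Open Scope ring_scope.

(* The proof separates linear algebra from scalar identities.
   - Pencils: l is an eigenvalue of A B^-1 iff v A = l (v B) for some v != 0.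
     Hence swapping the pencil inverts its spectrum, and replacing Y by
     ph Y + ps X maps it by c |-> ph c + ps.  For positive definite X, Y the
     spectrum is positive (Rayleigh quotients) and nonempty: a complex
     eigenvector v gives z (v X v^* ) = v Y v^*, where both hermitian forms
     are real and positive.  Being finite, the spectrum attains its inf and
     sup, so monotone (antitone) maps carry a, b to the new extremes.
   - Scalars: phi and psi interpolate x |-> x^t at the nodes a, b; they
     transform correctly under (a, b, t) |-> (b^-1, a^-1, 1 - t) and compose
     along t |-> s t; they are nonnegative for t in [0, 1].
   Part (i) combines spectrum inversion with the first scalar law, part (ii)
   uses that the pencil (X *_t Y, X) has extremes a^t, b^t, and part (iii)
   follows from (i) and (ii) since X *_s Y is again positive definite. *)

Section AttainedBounds.
Variable R : realType.
Implicit Types (S : set R) (f : R -> R).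

Lemma inf_attained S m : S m -> (forall x, S x -> m <= x) -> inf S = m.
Proof.
move=> Sm m_lb; apply/le_anti/andP; split.
  by apply: ge_inf => //; exists m => x /m_lb.
by apply: lb_le_inf; [exists m | move=> x /m_lb].
Qed.

Lemma sup_attained S m : S m -> (forall x, S x -> x <= m) -> sup S = m.
Proof.
move=> Sm m_ub; apply/le_anti/andP; split.
  by apply: ge_sup; [exists m | move=> x /m_ub].
apply: sup_upper_bound => //; split; first by exists m.
by exists m => x /m_ub.
Qed.

Lemma image_extrema_homo S f lo hi : S lo -> S hi ->
  (forall x, S x -> lo <= x <= hi) ->
  (forall x y, S x -> S y -> x <= y -> f x <= f y) ->
  inf (f @` S) = f lo /\ sup (f @` S) = f hi.
Proof.
move=> Slo Shi Sbd f_homo; split.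
- apply: inf_attained; first by exists lo.
  by move=> _ [x Sx <-]; apply: f_homo => //; case/andP: (Sbd x Sx).
- apply: sup_attained; first by exists hi.
  by move=> _ [x Sx <-]; apply: f_homo => //; case/andP: (Sbd x Sx).
Qed.

Lemma image_extrema_anti S f lo hi : S lo -> S hi ->
  (forall x, S x -> lo <= x <= hi) ->
  (forall x y, S x -> S y -> x <= y -> f y <= f x) ->
  inf (f @` S) = f hi /\ sup (f @` S) = f lo.
Proof.
move=> Slo Shi Sbd f_anti; split.
- apply: inf_attained; first by exists hi.
  by move=> _ [x Sx <-]; apply: f_anti => //; case/andP: (Sbd x Sx).
- apply: sup_attained; first by exists lo.
  by move=> _ [x Sx <-]; apply: f_anti => //; case/andP: (Sbd x Sx).
Qed.

End AttainedBounds.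

Lemma pencil_eigenP (F : fieldType) n (A B : 'M[F]_n) l : B \in unitmx ->
  reflect (exists2 v : 'rV_n, v != 0 & v *m A = l *: (v *m B))
          (eigenvalue (A *m invmx B) l).
Proof.
move=> Bu; apply: (iffP eigenvalueP) => [[v Av v0] | [v v0 Av]]; exists v => //.
  by rewrite scalemxAl -Av mulmxA mulmxKV.
by rewrite mulmxA Av scalemxAl mulmxK.
Qed.
Arguments pencil_eigenP {F n A B l}.

Section Pencil.
Variable R : realType.
Implicit Types (n : nat).

Lemma posdef_unit n (X : 'M[R]_n) : posdef X -> X \in unitmx.
Proof.
case=> _ X_pos; rewrite unitmxE unitfE; apply/negP => /det0P [v v0 vX].
by have := X_pos v v0; rewrite vX mul0mx mxE ltxx.
Qed.

(* For invertible A and B, v A = l (v B) with v != 0 forces l != 0, and the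
   same vector exhibits l^-1 as an eigenvalue of the swapped pencil. *)
Lemma pencil_eigen_swap n (A B : 'M[R]_n) l : A \in unitmx -> B \in unitmx ->
  eigenvalue (A *m invmx B) l -> eigenvalue (B *m invmx A) l^-1.
Proof.
move=> Au Bu /(pencil_eigenP Bu) [v v0 vA]; apply/(pencil_eigenP Au).
have l_neq0 : l != 0.
  by apply: contraNneq v0 => l0; rewrite -(mulmxK Au v) vA l0 scale0r mul0mx.
by exists v => //; rewrite vA scalerA mulVf // scale1r.
Qed.

Lemma spectrum_swap n (X Y : 'M[R]_n) : X \in unitmx -> Y \in unitmx ->
  spectrum (X *m invmx Y) = GRing.inv @` spectrum (Y *m invmx X).
Proof.
move=> Xu Yu; apply/seteqP; split => [l /= l_eig | _ [l /= l_eig <-]].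
  by exists l^-1; [exact: pencil_eigen_swap | rewrite invrK].
exact: pencil_eigen_swap.
Qed.

Lemma spectrum_affine n (X Y : 'M[R]_n) (ph ps : R) : X \in unitmx ->
  spectrum (Y *m invmx X) !=set0 ->
  spectrum ((ph *: Y + ps *: X) *m invmx X) =
    (fun c => ph * c + ps) @` spectrum (Y *m invmx X).
Proof.
move=> Xu [c0 c0_eig]; have combE (v : 'rV_n) :
    v *m (ph *: Y + ps *: X) = ph *: (v *m Y) + ps *: (v *m X).
  by rewrite mulmxDr -!scalemxAr.
apply/seteqP; split => [l /= | _ [c /= /(pencil_eigenP Xu) [v v0 vY] <-]]; last first.
  apply/(pencil_eigenP Xu); exists v => //.
  by rewrite combE vY scalerA scalerDl.
move=> /(pencil_eigenP Xu) [v v0]; rewrite combE => vl.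
have vX0 : v *m X != 0.
  by apply: contraNneq v0 => vX0; rewrite -(mulmxK Xu v) vX0 mul0mx.
have [ph0 | ph_neq0] := eqVneq ph 0.
  exists c0 => //=; move: vl; rewrite ph0 scale0r add0r mul0r add0r => /eqP.
  by rewrite -subr_eq0 -scalerBl scaler_eq0 (negPf vX0) orbF subr_eq0 => /eqP.
exists ((l - ps) / ph); last by rewrite mulrC divfK // subrK.
apply/(pencil_eigenP Xu); exists v => //; apply: (scalerI ph_neq0).
by rewrite scalerA mulrCA mulfV // mulr1 scalerBl -vl addrK.
Qed.

(* For positive definite X and Y, the pencil eigenvalues are Rayleigh
   quotients (v Y v^T) / (v X v^T), hence positive. *)
Lemma pencil_eigen_gt0 n (X Y : 'M[R]_n) l : posdef X -> posdef Y ->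
  spectrum (Y *m invmx X) l -> 0 < l.
Proof.
move=> X_pd Y_pd /(pencil_eigenP (posdef_unit X_pd)) [v v0 vY].
have := Y_pd.2 v v0; rewrite vY -scalemxAl mxE.
by rewrite pmulr_lgt0 // (X_pd.2 v v0).
Qed.

Definition qform n (A : 'M[R]_n) (v : 'rV[R]_n) : R := (v *m A *m v^T) 0 0.

Lemma qformDZ n (X Y : 'M[R]_n) (ph ps : R) v :
  qform (ph *: Y + ps *: X) v = ph * qform Y v + ps * qform X v.
Proof.
rewrite /qform mulmxDr mulmxDl -!scalemxAr -!scalemxAl [LHS]mxE.
by congr (_ + _); rewrite mxE.
Qed.

Lemma qform_ge0 n (X : 'M[R]_n) v : posdef X -> 0 <= qform X v.
Proof.
move=> X_pd; have [->|v0] := eqVneq v 0; last exact: ltW (X_pd.2 v v0).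
by rewrite /qform !mul0mx mxE.
Qed.

Lemma posdef_comb n (X Y : 'M[R]_n) (ph ps : R) : posdef X -> posdef Y ->
  0 <= ph -> 0 <= ps -> (ph != 0) || (ps != 0) -> posdef (ph *: Y + ps *: X).
Proof.
move=> X_pd Y_pd ph_ge0 ps_ge0 nz; split.
  by rewrite linearD !linearZ /= X_pd.1 Y_pd.1.
move=> v v0; have vX : 0 < qform X v := X_pd.2 v v0.
have vY : 0 < qform Y v := Y_pd.2 v v0.
rewrite -/(qform _ v) qformDZ.
have [ph0 | ph_neq0] := eqVneq ph 0.
  move: nz; rewrite ph0 eqxx mul0r add0r /= => ps_neq0.
  by rewrite mulr_gt0 // lt_def ps_ge0 andbT.
have ph_gt0 : 0 < ph by rewrite lt_def ph_ge0 andbT.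
by have := mulr_gt0 ph_gt0 vY; have := mulr_ge0 ps_ge0 (ltW vX); lra.
Qed.

End Pencil.

Section RealEigenvalue.
Variable R : realType.
Local Notation C := R[i].
Local Notation toC := (map_mx (real_complex R)).
Local Notation Rev := (map_mx (@complex.Re R)).
Local Notation Imv := (map_mx (@complex.Im R)).

Lemma row_complexE m n (v : 'M[C]_(m, n)) : v = toC (Rev v) + 'i%C *: toC (Imv v).
Proof. by apply/matrixP => i j; rewrite !mxE; case: (v i j) => a b; simpc. Qed.

Lemma hermitian_qform n (A : 'M[R]_n) (v : 'rV[C]_n) : A^T = A ->
  (v *m toC A *m (map_mx conjc v)^T) 0 0 = (qform A (Rev v) + qform A (Imv v))%:C%C.
Proof.
move=> A_sym; set p := Rev v; set q := Imv v.
have vcE : map_mx conjc v = toC p - 'i%C *: toC q.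
  by apply/rowP => j; rewrite !mxE; case: (v 0 j) => a b; simpc.
have cross_sym : (toC q *m toC A *m (toC p)^T) 0 0 = (toC p *m toC A *m (toC q)^T) 0 0.
  transitivity ((toC q *m toC A *m (toC p)^T)^T 0 0); first by rewrite [RHS]mxE.
  by rewrite !trmx_mul trmxK [(toC A)^T]map_trmx A_sym mulmxA.
have qformC x : (qform A x)%:C%C = (toC x *m toC A *m (toC x)^T) 0 0.
  by rewrite /qform map_trmx -!map_mxM [RHS]mxE.
rewrite vcE [in LHS](row_complexE v) rmorphD /= !qformC.
rewrite raddfB /= linearZ /= mulmxDl mulmxBr !mulmxDl -!scalemxAl -!scalemxAr.
move: cross_sym; move: (toC q *m _ *m (toC p)^T) (toC p *m _ *m (toC q)^T).
move=> Mqp Mpq cross_sym; move: (toC p *m _ *m _) (toC q *m _ *m _) => Mpp Mqq.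
by rewrite !mxE cross_sym mulrA -expr2 sqr_i; ring.
Qed.

(* A positive definite pencil has a real eigenvalue: a complex eigenvalue z
   satisfies z (v X v^* ) = v Y v^*, and both forms are real and positive. *)
Lemma pencil_spectrum_neq0 n (X Y : 'M[R]_n) : (0 < n)%N -> posdef X -> posdef Y ->
  spectrum (Y *m invmx X) !=set0.
Proof.
move=> n_gt0 X_pd Y_pd; set M := Y *m invmx X.
have [z /eigenvalueP [v vM v0]] := eigenvalue_closed (toC M) n_gt0.
have vY : v *m toC Y = z *: (v *m toC X).
  by rewrite -[Y](mulmxKV (posdef_unit X_pd)) -/M map_mxM mulmxA vM scalemxAl.
have := congr1 (fun N => (N *m (map_mx conjc v)^T) 0 0) vY.
rewrite /= -scalemxAl [X in _ = X]mxE !hermitian_qform ?X_pd.1 ?Y_pd.1 //.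
set y := qform Y _ + _; set x := qform X _ + _ => yxz.
have x_gt0 : 0 < x.
  have p_ge0 := qform_ge0 (Rev v) X_pd; have q_ge0 := qform_ge0 (Imv v) X_pd.
  have [p0 | p_neq0] := eqVneq (Rev v) 0; last first.
    by have : 0 < qform X (Rev v) := X_pd.2 _ p_neq0; rewrite /x; lra.
  have [q0 | q_neq0] := eqVneq (Imv v) 0; last first.
    by have : 0 < qform X (Imv v) := X_pd.2 _ q_neq0; rewrite /x; lra.
  by move: v0; rewrite [v]row_complexE p0 q0 raddf0 scaler0 addr0 eqxx.
have zE : z = ((y / x)%:C)%C.
  have xC_neq0 : x%:C%C != 0 by rewrite fmorph_eq0 gt_eqF.
  by apply: (mulIf xC_neq0); rewrite -rmorphM divfK ?gt_eqF.
exists (y / x); rewrite /spectrum /= eigenvalue_root_char.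
rewrite -(fmorph_root (real_complex R)) map_char_poly -eigenvalue_root_char.
by apply/eigenvalueP; exists v; rewrite // vM zE.
Qed.

End RealEigenvalue.

Section Extrema.
Variable R : realType.

(* The real spectrum of a matrix is the finite, sorted list of real roots of
   its characteristic polynomial; if nonempty, its extremes are attained. *)
Lemma spectrum_extrema n (M : 'M[R]_n) : spectrum M !=set0 ->
  [/\ spectrum M (lambda_min M), spectrum M (lambda_max M)
    & forall l, spectrum M l -> lambda_min M <= l <= lambda_max M].
Proof.
move=> [l0 l0_eig]; set s := rootsR (char_poly M).
have cp_neq0 : char_poly M != 0 by apply/monic_neq0/char_poly_monic.
have memS l : spectrum M l <-> l \in s.
  by rewrite -(roots_on_rootsR cp_neq0) in_itv /= -eigenvalue_root_char.
have s_sorted : sorted <=%R s by apply: sub_sorted (sorted_roots _ _ _) => x y /ltW.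
have l0s : l0 \in s by apply/memS.
have s_gt0 : (0 < size s)%N by move: l0s; rewrite -index_mem; apply: leq_ltn_trans.
pose lo := nth 0 s 0; pose hi := nth 0 s (size s).-1.
have s_bd l : l \in s -> lo <= l <= hi.
  move=> ls; have idx_lt : (index l s < size s)%N by rewrite index_mem.
  have idx_le : (index l s <= (size s).-1)%N by rewrite -ltnS prednK.
  have last_lt : ((size s).-1 < size s)%N by rewrite prednK.
  by rewrite -(nth_index 0 ls) !(sorted_leq_nth le_trans lexx 0 s_sorted).
have [lo_s hi_s] : lo \in s /\ hi \in s by rewrite !mem_nth ?prednK.
have [-> ->] : lambda_min M = lo /\ lambda_max M = hi.
  by split; [apply: inf_attained | apply: sup_attained];
    rewrite ?memS // => l /memS /s_bd /andP[].
by split; rewrite ?memS // => l /memS /s_bd.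
Qed.

End Extrema.

Section PencilExtrema.
Variable R : realType.
Variables (n : nat) (X Y : 'M[R]_n).
Hypotheses (n_gt0 : (0 < n)%N) (X_pd : posdef X) (Y_pd : posdef Y).

Let a := lambda_min (Y *m invmx X).
Let b := lambda_max (Y *m invmx X).

Lemma pencil_extrema : [/\ 0 < a, a <= b, spectrum (Y *m invmx X) a,
  spectrum (Y *m invmx X) b & forall l, spectrum (Y *m invmx X) l -> a <= l <= b].
Proof.
have [Sa Sb Sab] := spectrum_extrema (pencil_spectrum_neq0 n_gt0 X_pd Y_pd).
split=> //; first exact: pencil_eigen_gt0 X_pd Y_pd Sa.
by case/andP: (Sab _ Sa).
Qed.

Lemma pencil_swap_extrema :
  lambda_min (X *m invmx Y) = b^-1 /\ lambda_max (X *m invmx Y) = a^-1.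
Proof.
have [_ _ Sa Sb Sab] := pencil_extrema.
rewrite /lambda_min /lambda_max spectrum_swap ?posdef_unit //.
apply: image_extrema_anti Sa Sb Sab _ => x y Sx Sy xy.
by rewrite lef_pV2 ?posrE ?(pencil_eigen_gt0 X_pd Y_pd).
Qed.

Lemma pencil_affine_extrema (ph ps : R) : 0 <= ph ->
  lambda_min ((ph *: Y + ps *: X) *m invmx X) = ph * a + ps /\
  lambda_max ((ph *: Y + ps *: X) *m invmx X) = ph * b + ps.
Proof.
move=> ph_ge0; have [_ _ Sa Sb Sab] := pencil_extrema.
rewrite /lambda_min /lambda_max spectrum_affine ?posdef_unit //; last by exists a.
apply: image_extrema_homo Sa Sb Sab _ => x y _ _ xy.
by rewrite lerD2r ler_wpM2l.
Qed.

End PencilExtrema.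

Section Coefficients.
Variable R : realType.
Variables a b : R.
Hypotheses (a_gt0 : 0 < a) (a_le_b : a <= b).
Implicit Types s t u : R.

Let b_gt0 : 0 < b. Proof. exact: lt_le_trans a_gt0 a_le_b. Qed.
Let a_neq0 : a != 0. Proof. by rewrite gt_eqF. Qed.
Let b_neq0 : b != 0. Proof. by rewrite gt_eqF. Qed.

Lemma powRV x u : 0 < x -> x^-1 `^ u = x `^ (- u).
Proof. by move=> x_gt0; rewrite -powR_inv1 ?ltW // -powRrM mulN1r. Qed.

Lemma powR_subr1 x u : 0 < x -> x `^ (u - 1) = x `^ u / x.
Proof.
by move=> x_gt0; rewrite powRB ?(gt_eqF x_gt0) ?implybT // powRr1 // ltW.
Qed.

Lemma phi_psi_interp t :
  phi_ab a b t * a + psi_ab a b t = a `^ t /\ phi_ab a b t * b + psi_ab a b t = b `^ t.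
Proof.
rewrite /phi_ab /psi_ab; have [-> | b_neq_a] := eqVneq b a.
  by rewrite powR_subr1 //; move: (a `^ t) => A; split; field.
have ba_neq0 : b - a != 0 by rewrite subr_eq0.
by move: (a `^ t) (b `^ t) => A B; split; field.
Qed.

Lemma phi_psi_inv t :
  phi_ab b^-1 a^-1 (1 - t) = psi_ab a b t /\ psi_ab b^-1 a^-1 (1 - t) = phi_ab a b t.
Proof.
rewrite /phi_ab /psi_ab; have [-> | b_neq_a] := eqVneq b a.
  have e1 : - (1 - t - 1) = t by ring.
  have e2 : - (1 - t) = t - 1 by ring.
  have e3 : 1 - (1 - t) = t by ring.
  by rewrite eqxx !powRV // e1 e3 e2.
have -> : (a^-1 == b^-1) = false by apply/negbTE; apply: contra b_neq_a => /eqP/invr_inj->.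
rewrite !powRV // opprB !powR_subr1 //.
have ba_neq0 : b - a != 0 by rewrite subr_eq0.
by move: (a `^ t) (b `^ t) => A B; split; field; rewrite ba_neq0 a_neq0 b_neq0.
Qed.

Lemma phi_psi_comp s t : 0 <= t ->
  phi_ab (a `^ t) (b `^ t) s * phi_ab a b t = phi_ab a b (s * t) /\
  phi_ab (a `^ t) (b `^ t) s * psi_ab a b t + psi_ab (a `^ t) (b `^ t) s =
    psi_ab a b (s * t).
Proof.
move=> t_ge0; rewrite /phi_ab /psi_ab.
have powMst x : x `^ (s * t) = (x `^ t) `^ s by rewrite mulrC powRrM.
have At_neq0 : a `^ t != 0 by rewrite gt_eqF // powR_gt0.
have [-> | b_neq_a] := eqVneq b a.
  rewrite !eqxx !powR_subr1 ?powR_gt0 // -!powMst.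
  move: (a `^ t) (a `^ (s * t)) At_neq0 => A As A_neq0.
  by split; field; rewrite ?A_neq0 ?a_neq0.
have ba_neq0 : b - a != 0 by rewrite subr_eq0.
have [-> | t_neq0] := eqVneq t 0.
  rewrite mulr0 !powRr0 eqxx powR1 subrr !mul0r mulr0.
  by split=> //; field.
have a_lt_b : a < b by rewrite lt_def b_neq_a a_le_b.
have t_gt0 : 0 < t by rewrite lt_def t_neq0 t_ge0.
have At_lt_Bt : a `^ t < b `^ t by apply: gt0_ltr_powR; rewrite ?nnegrE ?ltW.
rewrite (gt_eqF At_lt_Bt) -!powMst.
have BA_neq0 : b `^ t - a `^ t != 0 by rewrite subr_eq0 gt_eqF.
move: (a `^ t) (b `^ t) (a `^ (s * t)) (b `^ (s * t)) BA_neq0 => A B As Bs BA_neq0.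
by split; field; rewrite ?BA_neq0 ?ba_neq0.
Qed.

Lemma phi_ge0 t : 0 <= t -> 0 <= phi_ab a b t.
Proof.
move=> t_ge0; rewrite /phi_ab; have [_ | b_neq_a] := eqVneq b a.
  by rewrite mulr_ge0 // powR_ge0.
have a_lt_b : a < b by rewrite lt_def b_neq_a a_le_b.
rewrite divr_ge0 ?subr_ge0 //; have [-> | t_neq0] := eqVneq t 0; first by rewrite !powRr0.
have t_gt0 : 0 < t by rewrite lt_def t_neq0 t_ge0.
by apply/ltW/gt0_ltr_powR; rewrite ?nnegrE ?ltW.
Qed.

(* psi >= 0 for t <= 1, since a b^t <= b a^t amounts to b^(t-1) <= a^(t-1). *)
Lemma psi_ge0 t : t <= 1 -> 0 <= psi_ab a b t.
Proof.
move=> t_le1; rewrite /psi_ab; have [_ | b_neq_a] := eqVneq b a.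
  by rewrite mulr_ge0 ?powR_ge0 // subr_ge0.
have a_lt_b : a < b by rewrite lt_def b_neq_a a_le_b.
rewrite divr_ge0 ?subr_ge0 //.
have -> : a * b `^ t = a * b * b `^ (t - 1) by rewrite powR_subr1 //; field.
have -> : b * a `^ t = a * b * a `^ (t - 1) by rewrite powR_subr1 //; field.
apply: ler_wpM2l; first by rewrite mulr_ge0 ?ltW.
have [-> | t_neq1] := eqVneq t 1.
  by rewrite subrr !powRr0.
have t1_gt0 : 0 < 1 - t by rewrite subr_gt0 lt_neqAle t_neq1 t_le1.
rewrite -opprB -!powRV //; apply/ltW/gt0_ltr_powR; rewrite ?ltf_pV2 //.
  by rewrite nnegrE invr_ge0 ltW.
by rewrite nnegrE invr_ge0 ltW.
Qed.

End Coefficients.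

Section Geodesic.
Variables (R : realType) (n : nat).
Hypothesis n_gt0 : (0 < n)%N.
Implicit Types (X Y : 'M[R]_n) (s t : R).

Lemma thompson_sym X Y t : posdef X -> posdef Y ->
  thompson X Y t = thompson Y X (1 - t).
Proof.
move=> X_pd Y_pd; rewrite /thompson /=.
have [-> ->] := pencil_swap_extrema n_gt0 X_pd Y_pd.
have [a_gt0 a_le_b _ _ _] := pencil_extrema n_gt0 X_pd Y_pd.
by have [-> ->] := phi_psi_inv a_gt0 a_le_b t; rewrite addrC.
Qed.

(* (ii) Reparametrization from the initial point X: the pencil of
   (X *_t Y, X) has extreme eigenvalues a^t and b^t. *)
Lemma thompson_compl X Y s t : posdef X -> posdef Y -> 0 <= t ->
  thompson X (thompson X Y t) s = thompson X Y (s * t).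
Proof.
move=> X_pd Y_pd t_ge0; rewrite /thompson /=.
have [a_gt0 a_le_b _ _ _] := pencil_extrema n_gt0 X_pd Y_pd.
move: a_gt0 a_le_b; set a := lambda_min _; set b := lambda_max _ => a_gt0 a_le_b.
have [-> ->] := pencil_affine_extrema n_gt0 X_pd Y_pd (psi_ab a b t)
  (phi_ge0 a_gt0 a_le_b t_ge0).
have [-> ->] := phi_psi_interp b a_gt0 t.
have [<- <-] := phi_psi_comp a_gt0 a_le_b s t_ge0.
by rewrite scalerDr !scalerA -addrA -scalerDl.
Qed.

(* For s in [0, 1] the geodesic is a nontrivial nonnegative combination of
   X and Y, hence stays positive definite. *)
Lemma thompson_posdef X Y s : posdef X -> posdef Y -> 0 <= s <= 1 ->
  posdef (thompson X Y s).
Proof.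
move=> X_pd Y_pd /andP[s_ge0 s_le1]; rewrite /thompson /=.
have [a_gt0 a_le_b _ _ _] := pencil_extrema n_gt0 X_pd Y_pd.
move: a_gt0 a_le_b; set a := lambda_min _; set b := lambda_max _ => a_gt0 a_le_b.
apply: posdef_comb => //; [exact: phi_ge0 | exact: psi_ge0 |].
have [interp_a _] := phi_psi_interp b a_gt0 s.
rewrite -negb_and; apply/negP => /andP[/eqP phi0 /eqP psi0].
by have := powR_gt0 s a_gt0; rewrite -interp_a phi0 psi0 mul0r addr0 ltxx.
Qed.

Lemma thompson_compr X Y s t : posdef X -> posdef Y -> 0 <= s <= 1 -> 0 <= t <= 1 ->
  thompson (thompson X Y s) Y t = thompson X Y (s + t - s * t).
Proof.
move=> X_pd Y_pd s01 /andP[_ t_le1].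
have Z_pd := thompson_posdef X_pd Y_pd s01.
rewrite (thompson_sym t Z_pd Y_pd) (thompson_sym s X_pd Y_pd).
rewrite thompson_compl ?subr_ge0 //; last by case/andP: s01.
by rewrite (thompson_sym _ Y_pd X_pd); congr thompson; ring.
Qed.

End Geodesic.

Theorem lemma4p1 (R : realType) (n : nat) (X Y : 'M[R]_n) (s t : R) :
  posdef X -> posdef Y -> 0 <= s <= 1 -> 0 <= t <= 1 ->
  [/\ thompson X Y t = thompson Y X (1 - t),
      thompson X (thompson X Y t) s = thompson X Y (s * t)
    & thompson (thompson X Y s) Y t = thompson X Y (s + t - s * t)].
Proof.
case: n X Y => [|n] X Y X_pd Y_pd s01 t01.
  by split; rewrite [LHS]flatmx0 [RHS]flatmx0.
split; first exact: thompson_sym.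
  by apply: thompson_compl => //; case/andP: t01.
exact: thompson_compr.
Qed.
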